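(* Let $n\ge 2$ and $q\ge 0$ be real. Let $A\in M_n(\mathbb{C})$ be normal and $B\in M_n(\mathbb{C})$ arbitrary. Then $$\|AB-qBA\|_F^2\le (1+q^2)\,\|A\|_{(2),2}^2\,\|B\|_F^2 .$$ The bound is sharp: equality holds for $A=\operatorname{diag}(1,-q,0,\dots,0)$ and $B$ the matrix whose only nonzero entry is $b_{12}=1$.
   Context: $\|X\|_F=\sqrt{\operatorname{tr}(XX^\dagger)}$ is the Frobenius norm. For $X\in M_n(\mathbb{C})$ with singular values $s_1\ge s_2\ge\cdots\ge s_n$, the Ky Fan $(2),2$ norm is $\|X\|_{(2),2}=\sqrt{s_1^2+s_2^2}$. *)

(* Complex numbers: an arbitrary numClosedFieldType C
   (e.g. algC or complex R for R : rcfType). *)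
From HB Require Import structures.
From mathcomp Require Import all_boot all_order all_algebra.
From mathcomp Require Import sesquilinear spectral.
Set Implicit Arguments. Unset Strict Implicit. Unset Printing Implicit Defensive.
Import Order.TTheory GRing.Theory Num.Theory.
Local Open Scope ring_scope.
Local Open Scope sesquilinear_scope.

Section Norms.
Context {C : numClosedFieldType} {n : nat}.

Definition frob (X : 'M[C]_n) : C := sqrtC (\tr (X *m X ^t*)).

Definition gram_eigs (X : 'M[C]_n) : seq C :=
  sort (fun x y : C => y <= x)
    (projT1 (closed_field_poly_normal (char_poly (X *m X ^t*)))).

Definition svals (X : 'M[C]_n) : seq C := map sqrtC (gram_eigs X).

Definition kyfan22 (X : 'M[C]_n) : C :=
  sqrtC ((svals X)`_0 ^+ 2 + (svals X)`_1 ^+ 2).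

End Norms.

Definition Aext {C : numClosedFieldType} (n : nat) (q : C) : 'M[C]_n :=
  \matrix_(i, j) (if i == j then
                    (if val i == 0%N then 1 else if val i == 1%N then - q else 0)
                  else 0).

Definition Bext {C : numClosedFieldType} (n : nat) : 'M[C]_n :=
  \matrix_(i, j) ((val i == 0%N) && (val j == 1%N))%:R.

From mathcomp Require Import all_boot all_order all_algebra.
From mathcomp Require Import sesquilinear spectral.
From mathcomp Require Import ring.
Import Order.TTheory GRing.Theory Num.Theory.
Local Open Scope ring_scope.

(* Write the normal matrix A as U^* D U with U unitary and D = diag(d). The
   Frobenius norm is unitarily invariant, so A may be replaced by D and B by
   U B U^*. The (i, j) entry of D B - q B D is (d_i - q d_j) b_ij, and by
   Cauchy-Schwarz |d_i - q d_j|^2 <= (1 + q^2) (|d_i|^2 + |d_j|^2). The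
   |d_k|^2 are the eigenvalues of A A^*, so for i != j the last factor is at
   most the sum of the two largest of them, i.e. ||A||_(2),2^2; summing over
   the entries gives the bound. *)

Section SortedTopTwo.
Variable R : numDomainType.
Implicit Types (g : seq R) (x : R).

Local Notation geR := (fun x y : R => y <= x).

Lemma geR_trans : transitive geR.
Proof. by move=> y x z xy yz; exact: le_trans yz xy. Qed.

Lemma sorted_ge_nth0 g x : sorted geR g -> x \in g -> x <= g`_0.
Proof.
case: g => [|x0 s] //= sg; rewrite in_cons => /orP[/eqP -> //|xs].
by have /allP := order_path_min geR_trans sg; apply.
Qed.

Lemma sorted_ge_nth1 g x :
  sorted geR g -> (1 < count (fun y => (x <= y)%R) g)%N -> x <= g`_1.
Proof.
case: g => [|x0 [|x1 s]] //=; first by case: (x <= x0).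
case/andP=> _ sg1; have /allP s_le_x1 := order_path_min geR_trans sg1.
case: (boolP (x <= x1)) => //= x_gt_x1.
suff -> : count (fun y => (x <= y)%R) s = 0%N by case: (x <= x0).
apply/eqP; rewrite -leqn0 leqNgt -has_count; apply/hasP => -[y ys x_le_y].
by rewrite (le_trans x_le_y (s_le_x1 y ys)) in x_gt_x1.
Qed.

Lemma sorted_perm_top2_ge m g (e : 'I_m -> R) i j :
  sorted geR g -> perm_eq g (map e (enum 'I_m)) -> i != j -> e j <= e i ->
  e i + e j <= g`_0 + g`_1.
Proof.
move=> sg pg ij eji; apply: lerD.
  by apply: sorted_ge_nth0 => //; rewrite (perm_mem pg) map_f ?mem_enum.
apply: sorted_ge_nth1 => //.
rewrite (permP pg) count_map -size_filter.
apply: (@uniq_leq_size _ [:: i; j]); first by rewrite /= inE ij.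
by move=> k; rewrite !inE mem_filter mem_enum /= andbT => /orP[]/eqP ->.
Qed.

Lemma sorted_perm_top2_real m g (e : 'I_m -> R) i j :
  sorted geR g -> perm_eq g (map e (enum 'I_m)) ->
  (forall k, e k \is Num.real) -> i != j -> e i + e j <= g`_0 + g`_1.
Proof.
move=> sg pg e_real ij.
have /orP[eij|eji] := real_leVge (e_real i) (e_real j).
  by rewrite addrC; apply: sorted_perm_top2_ge; rewrite // eq_sym.
exact: sorted_perm_top2_ge.
Qed.

End SortedTopTwo.

Lemma char_poly_conj (R : comNzRingType) n (P Q E : 'M[R]_n) :
  Q *m P = 1%:M -> char_poly (Q *m E *m P) = char_poly E.
Proof.
move=> QP; rewrite /char_poly /char_poly_mx.
have -> : 'X%:M - map_mx polyC (Q *m E *m P) =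
    map_mx polyC Q *m ('X%:M - map_mx polyC E) *m map_mx polyC P.
  rewrite mulmxBr mulmxBl -!map_mxM mul_mx_scalar -scalemxAl -map_mxM QP.
  by rewrite map_mx1 scalemx1.
by rewrite !det_mulmx mulrAC -det_mulmx -map_mxM QP map_mx1 det1 mul1r.
Qed.

Section QCommutator.
Variables (R : comUnitRingType) (n : nat) (q : R).

Definition qcomm (X Y : 'M[R]_n) := X *m Y - q *: (Y *m X).

Lemma qcomm_conj (P X Y : 'M[R]_n) : P \in unitmx ->
  qcomm (invmx P *m X *m P) (invmx P *m Y *m P) = invmx P *m qcomm X Y *m P.
Proof.
move=> Pu; rewrite /qcomm mulmxBr mulmxBl -scalemxAr -scalemxAl.
have PK (Z : 'M[R]_n) : invmx P *m Z *m P *m invmx P = invmx P *m Z.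
  by rewrite mulmxK.
by rewrite !mulmxA !PK.
Qed.

Lemma qcomm_diag_mxE (d : 'rV[R]_n) (Y : 'M[R]_n) i j :
  qcomm (diag_mx d) Y i j = (d 0 i - q * d 0 j) * Y i j.
Proof. by rewrite /qcomm mul_diag_mx mul_mx_diag !mxE; ring. Qed.

Lemma qcomm_diag_delta (d : 'rV[R]_n) i j :
  qcomm (diag_mx d) (delta_mx i j) = (d 0 i - q * d 0 j) *: delta_mx i j.
Proof.
apply/matrixP => k l; rewrite qcomm_diag_mxE !mxE.
by case: (eqVneq k i) => [->|]; case: (eqVneq l j) => [->|] //=; rewrite !mulr0.
Qed.

End QCommutator.

Arguments qcomm {R n} q X Y.

Section FrobeniusKyFan.
Variable C : numClosedFieldType.
Local Open Scope sesquilinear_scope.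

Lemma frob_sqrE n (X : 'M[C]_n) : frob X ^+ 2 = \sum_i \sum_j `|X i j| ^+ 2.
Proof.
rewrite /frob sqrtCK /mxtrace; apply: eq_bigr => i _.
by rewrite !mxE; apply: eq_bigr => j _; rewrite !mxE normCK.
Qed.

Lemma frob_scale_delta n (c : C) (i j : 'I_n) :
  frob (c *: delta_mx i j) ^+ 2 = `|c| ^+ 2.
Proof.
rewrite frob_sqrE (bigD1 i) //= (bigD1 j) //= big1 => [|k kj]; last first.
  by rewrite !mxE (negbTE kj) andbF mulr0 normr0 expr0n.
rewrite big1 => [|k ki]; last first.
  by apply: big1 => l _; rewrite !mxE (negbTE ki) mulr0 normr0 expr0n.
by rewrite !mxE !eqxx mulr1 !addr0.
Qed.

Lemma frob_unitary_conj n (P Y : 'M[C]_n) : P \is unitarymx ->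
  frob (P^t* *m Y *m P) = frob Y.
Proof.
move=> PU; have /unitarymxP PP := PU; rewrite /frob; congr sqrtC.
rewrite !trmx_mul !map_mxM trmxCK !mulmxA mulmxtVK // mxtrace_mulC.
by rewrite !mulmxA PP mul1mx.
Qed.

Lemma gram_eigs_unitary_diag n (P : 'M[C]_n) d : P \is unitarymx ->
  perm_eq (gram_eigs (P^t* *m diag_mx d *m P))
          (map (fun i => `|d 0 i| ^+ 2) (enum 'I_n)).
Proof.
move=> PU; have PP : P^t* *m P = 1%:M by rewrite -[P^t*]mul1mx mulmxKtV.
rewrite /gram_eigs; case: closed_field_poly_normal => r /= Hr.
rewrite perm_sort; apply: prod_XsubC_eq.
rewrite big_map big_enum /=.
move: Hr; rewrite (monicP (char_poly_monic _)) scale1r => <-.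
rewrite !trmx_mul !map_mxM trmxCK tr_diag_mx map_diag_mx.
rewrite !mulmxA mulmxtVK // -(mulmxA _ (diag_mx d)) char_poly_conj //.
rewrite char_poly_trig.
  by apply: eq_bigr => i _; rewrite mul_diag_mx !mxE eqxx mulr1n normCK.
apply/is_trig_mxP => a b ab; rewrite mul_diag_mx !mxE.
rewrite (_ : (a == b) = false) ?mulr0n ?mulr0 //.
by apply/negbTE; rewrite neq_ltn ab.
Qed.

Lemma sorted_gram_eigs n (X : 'M[C]_n) :
  {subset gram_eigs X <= Num.real} -> sorted (fun x y => y <= x) (gram_eigs X).
Proof.
move=> g_real; apply: (sort_sorted_in (P := Num.real)); last first.
  by apply/allP => x xr; apply: g_real; rewrite /gram_eigs mem_sort.
move=> x y xr yr; rewrite /total /=.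
by case/orP: (real_leVge xr yr) => ->; rewrite ?orbT.
Qed.

Lemma kyfan22_sqrE n (X : 'M[C]_n) : (1 < size (gram_eigs X))%N ->
  kyfan22 X ^+ 2 = (gram_eigs X)`_0 + (gram_eigs X)`_1.
Proof.
move=> s2; rewrite /kyfan22 sqrtCK /svals.
by rewrite !(nth_map 0) ?sqrtCK // (ltn_trans _ s2).
Qed.

Section UnitaryDiagonal.
Variables (n : nat) (P : 'M[C]_n) (d : 'rV[C]_n).
Hypotheses (n_gt1 : (1 < n)%N) (PU : P \is unitarymx).

Let A := P^t* *m diag_mx d *m P.
Let g := gram_eigs A.

Let perm_g : perm_eq g (map (fun i => `|d 0 i| ^+ 2) (enum 'I_n)).
Proof. exact: gram_eigs_unitary_diag. Qed.

Let kyfan22A : kyfan22 A ^+ 2 = g`_0 + g`_1.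
Proof.
by apply: kyfan22_sqrE; rewrite (perm_size perm_g) size_map size_enum_ord.
Qed.

Lemma kyfan22_unitary_diag_ge i j : i != j ->
  `|d 0 i| ^+ 2 + `|d 0 j| ^+ 2 <= kyfan22 A ^+ 2.
Proof.
move=> ij; rewrite kyfan22A.
apply: (@sorted_perm_top2_real _ _ _ _ i j _ perm_g) => // [|k]; last first.
  by rewrite realX ?normr_real.
apply: sorted_gram_eigs => x; rewrite -/A -/g (perm_mem perm_g).
by case/mapP=> k _ ->; rewrite realX ?normr_real.
Qed.

Lemma kyfan22_unitary_diag_le_sum : kyfan22 A ^+ 2 <= \sum_i `|d 0 i| ^+ 2.
Proof.
have g_ge0 x : x \in g -> 0 <= x.
  by rewrite (perm_mem perm_g) => /mapP[k _ ->]; rewrite exprn_ge0.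
rewrite kyfan22A -big_enum -(big_map (fun i => `|d 0 i| ^+ 2) xpredT id).
rewrite -(perm_big _ perm_g).
move: g_ge0; case: g => [|x0 [|x1 s]] g_ge0 /=.
- by rewrite big_nil addr0.
- by rewrite big_seq1 addr0.
rewrite !big_cons addrA lerDl big_seq sumr_ge0 // => x xs.
by apply: g_ge0; rewrite !inE xs !orbT.
Qed.

Lemma kyfan22_unitary_diag_supp2 i j : i != j ->
  (forall k, k != i -> k != j -> d 0 k = 0) ->
  kyfan22 A ^+ 2 = `|d 0 i| ^+ 2 + `|d 0 j| ^+ 2.
Proof.
move=> ij d_supp; apply/le_anti; rewrite kyfan22_unitary_diag_ge // andbT.
rewrite (le_trans kyfan22_unitary_diag_le_sum) // (bigD1 i) //=.
rewrite (bigD1 j) 1?eq_sym //=.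
rewrite big1 ?addr0 // => k /andP[ki kj].
by rewrite d_supp // normr0 expr0n.
Qed.

End UnitaryDiagonal.

Lemma sqr_norm_sub_mul_le (q x y : C) : 0 <= q ->
  `|x - q * y| ^+ 2 <= (1 + q ^+ 2) * (`|x| ^+ 2 + `|y| ^+ 2).
Proof.
move=> q_ge0; apply: le_trans (_ : (`|x| + q * `|y|) ^+ 2 <= _).
  rewrite lerXn2r ?nnegrE ?addr_ge0 ?mulr_ge0 //.
  by apply: le_trans (ler_normB _ _) _; rewrite normrM ger0_norm.
rewrite -subr_ge0.
have -> : (1 + q ^+ 2) * (`|x| ^+ 2 + `|y| ^+ 2) - (`|x| + q * `|y|) ^+ 2
   = (q * `|x| - `|y|) ^+ 2 by ring.
by rewrite -realEsqr realB // realM // ger0_real.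
Qed.

Lemma sqr_norm_sub_mulr_le (q x : C) : 0 <= q ->
  `|x - q * x| ^+ 2 <= (1 + q ^+ 2) * `|x| ^+ 2.
Proof.
move=> q_ge0; have -> : x - q * x = (1 - q) * x by ring.
rewrite normrM exprMn real_normK ?realB ?ger0_real //.
rewrite ler_wpM2r ?exprn_ge0 // -subr_ge0.
have -> : 1 + q ^+ 2 - (1 - q) ^+ 2 = q *+ 2 by ring.
by rewrite mulrn_wge0.
Qed.

Lemma qcomm_diag_coef_le n (q K : C) (d : 'rV[C]_n) : 0 <= q -> (1 < n)%N ->
  (forall i j, i != j -> `|d 0 i| ^+ 2 + `|d 0 j| ^+ 2 <= K) ->
  forall i j, `|d 0 i - q * d 0 j| ^+ 2 <= (1 + q ^+ 2) * K.
Proof.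
move=> q_ge0 n_gt1 pairK i j.
have q2_ge0 : 0 <= 1 + q ^+ 2 by rewrite addr_ge0 ?exprn_ge0.
have [<-|ij] := eqVneq i j; last first.
  apply: le_trans (sqr_norm_sub_mul_le _ _ _ q_ge0) _.
  exact: (ler_wpM2l q2_ge0 (pairK _ _ ij)).
(* On the diagonal, |d_i|^2 is bounded through a pair {i, k}: here n >= 2. *)
have [k ik] : exists k : 'I_n, i != k.
  have n_gt0 := ltn_trans (ltnSn 0) n_gt1.
  have [->|i0] := eqVneq i (Ordinal n_gt0); first by exists (Ordinal n_gt1).
  by exists (Ordinal n_gt0).
apply: le_trans (sqr_norm_sub_mulr_le _ _ q_ge0) (ler_wpM2l q2_ge0 _).
by apply: le_trans (pairK _ _ ik); rewrite lerDl exprn_ge0.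
Qed.

Lemma frob_qcomm_diag_le n (q M : C) (d : 'rV[C]_n) (Y : 'M[C]_n) :
  (forall i j, `|d 0 i - q * d 0 j| ^+ 2 <= M) ->
  frob (qcomm q (diag_mx d) Y) ^+ 2 <= M * frob Y ^+ 2.
Proof.
move=> coefM; rewrite !frob_sqrE mulr_sumr; apply: ler_sum => i _.
rewrite mulr_sumr; apply: ler_sum => j _.
by rewrite qcomm_diag_mxE normrM exprMn ler_wpM2r ?exprn_ge0.
Qed.

Lemma frob_qcomm_normal_le n (q : C) (A B : 'M[C]_n) : (1 < n)%N -> 0 <= q ->
  A \is normalmx ->
  frob (qcomm q A B) ^+ 2 <= (1 + q ^+ 2) * kyfan22 A ^+ 2 * frob B ^+ 2.
Proof.
move=> n_gt1 q_ge0 /orthomx_spectralP.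
set P := spectralmx A; set d := spectral_diag A => AE.
have PU : P \is unitarymx by apply: spectral_unitarymx.
have Pu : P \in unitmx by apply: unitarymx_unit.
set Y := P *m B *m invmx P.
have BE : B = invmx P *m Y *m P by rewrite /Y !mulmxA mulVmx // mul1mx mulmxKV.
rewrite AE BE qcomm_conj // !invmx_unitary // !frob_unitary_conj //.
rewrite -invmx_unitary // -AE; apply: frob_qcomm_diag_le.
apply: qcomm_diag_coef_le => // i j ij.
by rewrite AE invmx_unitary //; apply: kyfan22_unitary_diag_ge.
Qed.

End FrobeniusKyFan.

Lemma frob_qcomm_ext_sharp (C : numClosedFieldType) n (q : C) :
  (1 < n)%N -> 0 <= q ->
  frob (qcomm q (Aext n q) (Bext n)) ^+ 2
    = (1 + q ^+ 2) * kyfan22 (Aext n q) ^+ 2 * frob (Bext n) ^+ 2.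
Proof.
move=> n_gt1 q_ge0; have n_gt0 := ltn_trans (ltnSn 0) n_gt1.
pose i0 : 'I_n := Ordinal n_gt0; pose i1 : 'I_n := Ordinal n_gt1.
pose a : 'rV[C]_n :=
  \row_i (if val i == 0%N then 1 else if val i == 1%N then - q else 0).
have AE : Aext n q = diag_mx a.
  apply/matrixP => i j; rewrite !mxE.
  by case: (i == j); rewrite ?mulr1n ?mulr0n.
have BE : Bext n = delta_mx i0 i1 :> 'M[C]_n.
  apply/matrixP => i j; rewrite !mxE.
  by congr (_ %:R); congr andb; apply/eqP/eqP => [/val_inj|->].
have One : (1%:M : 'M[C]_n) \is unitarymx.
  by apply/unitarymxP; rewrite trmx1 map_mx1 mulmx1.
have KE : kyfan22 (Aext n q) ^+ 2 = 1 + q ^+ 2.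
  have := @kyfan22_unitary_diag_supp2 C n 1%:M a n_gt1 One i0 i1 isT.
  rewrite trmx1 map_mx1 mul1mx mulmx1 -AE => ->; last first.
    move=> k /negbTE k0 /negbTE k1.
    by rewrite mxE -[_ == 0%N]/(k == i0) -[_ == 1%N]/(k == i1) k0 k1.
  by rewrite !mxE /= normr1 normrN ger0_norm // expr1n.
rewrite KE AE BE qcomm_diag_delta frob_scale_delta.
rewrite -[delta_mx i0 i1]scale1r frob_scale_delta.
rewrite !mxE /= normr1 expr1n mulr1 mulrN opprK -expr2 ger0_norm ?expr2 //.
by rewrite addr_ge0 ?mulr_ge0.
Qed.

Theorem proposition1 (C : numClosedFieldType) (n : nat) (hn : (2 <= n)%N)
  (q : C) (hq : 0 <= q) :
  (forall A B : 'M[C]_n, A \is normalmx ->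
     frob (A *m B - q *: (B *m A)) ^+ 2
       <= (1 + q ^+ 2) * kyfan22 A ^+ 2 * frob B ^+ 2) /\
  frob ((Aext n q) *m (Bext n) - q *: ((Bext n) *m (Aext n q))) ^+ 2
    = (1 + q ^+ 2) * kyfan22 (Aext n q) ^+ 2 * frob (Bext n) ^+ 2.
Proof.
split; last exact: frob_qcomm_ext_sharp.
by move=> A B; apply: frob_qcomm_normal_le.
Qed.
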